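(* Let $k\ge4$. For each $p\in\mathbb N_0(k)$, the Hammerstein equation $\int_0^1K_p(t,u;k)f^k(u)\,du=f(t)$, $t\in[0,1]$, has at least two distinct positive solutions $f\in C[0,1]$.
   Context: For integers $k\ge2$, $n\ge1$ and $x\in\mathbb R$: $P_{n,k}(x)=\left(1+\frac{x^{n-1}}{2}\right)^{k+1}-\left(1-\frac{x^{n-1}}{2}\right)^{k+1}$, and for $n>k$: $Q_{n,k}(x)=(k+1)x^{n-k}$. Fix an integer $k$ and, for each integer $n>k$, an arbitrary $\xi(k;n)\in(0,1)$ with $P_{n,k}(\xi(k;n))=Q_{n,k}(\xi(k;n))$. Let $\alpha=\limsup_{n\to\infty}\xi(k;n)^{n-1}$ and let $(n_p)_{p\in\mathbb N}$ be a strictly increasing sequence of integers $>k$ with $\xi(k;n_p)^{n_p-1}\to\alpha$. For $n>k$ put $$C_n(k)=\frac{\xi(k;n)^{3n-k-2}}{\frac{1}{k+2}\left[\left(1+\frac{\xi(k;n)^{n-1}}{2}\right)^{k+2}-\left(1-\frac{\xi(k;n)^{n-1}}{2}\right)^{k+2}\right]-\xi(k;n)^{n-k}},$$ $\gamma_p(k)=C_{n_p}(k)$, $\mathbb N_0(k)=\{p\in\mathbb N: |\gamma_p(k)|<4\}$, and for $p\in\mathbb N_0(k)$, $K_p(t,u;k)=1+\gamma_p(k)\left(t-\frac12\right)\left(u-\frac12\right)$, $t,u\in[0,1]$ (a strictly positive continuous kernel). *)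

From Stdlib Require Export Reals Lra Lia.
Open Scope R_scope.

Definition Pnk (n k : nat) (x : R) : R :=
  (1 + x ^ (n - 1) / 2) ^ (k + 1) - (1 - x ^ (n - 1) / 2) ^ (k + 1).

Definition Qnk (n k : nat) (x : R) : R := INR (k + 1) * x ^ (n - k).

Definition Cnk (n k : nat) (xi : R) : R :=
  xi ^ (3 * n - k - 2) /
  (/ INR (k + 2) * ((1 + xi ^ (n - 1) / 2) ^ (k + 2) - (1 - xi ^ (n - 1) / 2) ^ (k + 2))
   - xi ^ (n - k)).

Definition Kgam (gamma t u : R) : R := 1 + gamma * (t - 1/2) * (u - 1/2).

Definition is_limsup (u : nat -> R) (l : R) : Prop :=
  forall eps, eps > 0 ->
    (exists N, forall n, (N <= n)%nat -> u n < l + eps) /\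
    (forall N, exists n, (N <= n)%nat /\ l - eps < u n).

Definition cont_on_01 (f : R -> R) : Prop :=
  forall t, 0 <= t <= 1 -> limit1_in f (fun y => 0 <= y <= 1) (f t) t.

Definition pos_hammerstein_solution (K : R -> R -> R) (k : nat) (f : R -> R) : Prop :=
  cont_on_01 f /\
  (forall t, 0 <= t <= 1 -> 0 < f t) /\
  (forall t, 0 <= t <= 1 ->
     exists pr : Riemann_integrable (fun u => K t u * f u ^ k) 0 1,
       RiemannInt pr = f t).

From Stdlib Require Import Reals Lra Lia.
From Coquelicot Require Import Coquelicot.
Open Scope R_scope.

(* The kernel has mean 1 in u, so f = 1 is always a solution.  Looking
   for a second solution of the form f(u) = c (1 + s (u - 1/2)), the operator
   maps such an f to an affine function of t whose two coefficients are the
   moments int_0^1 (1 + s(u - 1/2))^k du and int_0^1 (u - 1/2)(1 + s(u - 1/2))^k du.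
   These have closed forms in (1 +- s/2)^(k+1), (1 +- s/2)^(k+2); with
   c = xi(k;n) and s = xi(k;n)^(n-1), the equation P = Q defining xi and the
   definition of C_n(k) are precisely the two resulting moment equations. *)

Lemma is_RInt_antiderivative (F g : R -> R) (a b : R) :
  a <= b ->
  (forall x, a <= x <= b -> is_derive F x (g x)) ->
  (forall x, a <= x <= b -> continuous g x) ->
  is_RInt g a b (F b - F a).
Proof.
  intros hab hF hg.
  apply (is_RInt_derive F g); rewrite Rmin_left, Rmax_right by lra; assumption.
Qed.

Lemma is_RInt_pos (h : R -> R) (a c b v : R) :
  a <= c < b ->
  (forall x, a <= x <= b -> continuous h x) ->
  (forall x, a < x < b -> 0 <= h x) ->
  (forall x, c < x < b -> 0 < h x) ->
  is_RInt h a b v -> 0 < v.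
Proof.
  intros hacb hcont hnonneg hpos hv.
  assert (hex : ex_RInt h a b) by (exists v; exact hv).
  assert (hac : ex_RInt h a c) by (apply (ex_RInt_Chasles_1 h a c b); [lra | assumption]).
  assert (hcb : ex_RInt h c b) by (apply (ex_RInt_Chasles_2 h a c b); [lra | assumption]).
  rewrite <- (is_RInt_unique _ _ _ _ hv), <- (RInt_Chasles h a c b hac hcb).
  assert (hleft : 0 <= RInt h a c).
  { apply RInt_ge_0; [lra | assumption | intros x hx; apply hnonneg; lra]. }
  assert (hright : 0 < RInt h c b).
  { apply RInt_gt_0; [lra | assumption | intros x hx; apply hcont; lra]. }
  change (plus (RInt h a c) (RInt h c b)) with (RInt h a c + RInt h c b). lra.
Qed.

Lemma RiemannInt_of_is_RInt (g : R -> R) (a b v : R) :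
  is_RInt g a b v -> exists pr : Riemann_integrable g a b, RiemannInt pr = v.
Proof.
  intros hv.
  exists (ex_RInt_Reals_0 g a b (ex_intro _ v hv)).
  rewrite <- RInt_Reals. exact (is_RInt_unique _ _ _ _ hv).
Qed.

Lemma cont_on_01_of_continuous (f : R -> R) :
  (forall t, continuous f t) -> cont_on_01 f.
Proof.
  intros hf t _ eps heps.
  assert (hpt : continuity_pt f t) by (apply continuity_pt_filterlim, hf).
  destruct (hpt eps heps) as [delta [hdelta hclose]].
  exists delta. split; [exact hdelta |]. intros y [_ hy].
  destruct (Req_dec y t) as [-> | hne].
  - simpl. unfold R_dist. rewrite Rminus_eq_0, Rabs_R0. lra.
  - apply hclose. repeat split; auto.
Qed.

(* The affine profile u |-> 1 + s (u - 1/2), and the polynomial moments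
   moment0 m s = int_0^1 lin^m  and  moment1 m s = int_0^1 (u - 1/2) lin^m,
   expressed in closed form through Dpow m s = (1 + s/2)^m - (1 - s/2)^m. *)
Definition lin (s u : R) : R := 1 + s * (u - 1/2).
Definition Dpow (m : nat) (s : R) : R := (1 + s/2) ^ m - (1 - s/2) ^ m.
Definition moment0 (m : nat) (s : R) : R := Dpow (m + 1) s / (INR (m + 1) * s).
Definition moment1 (m : nat) (s : R) : R := (moment0 (m + 1) s - moment0 m s) / s.

Lemma lin_pow_continuous (s : R) (m : nat) (u : R) :
  continuous (fun v => lin s v ^ m) u.
Proof.
  apply (ex_derive_continuous (V := R_NormedModule)). unfold lin. auto_derive. exact I.
Qed.

(* int_0^1 lin^m = Dpow (m+1) s / ((m+1) s), via the antiderivative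
   lin^(m+1) / ((m+1) s). *)
Lemma is_RInt_lin_pow (s : R) (m : nat) :
  s <> 0 -> is_RInt (fun u => lin s u ^ m) 0 1 (moment0 m s).
Proof.
  intros hs.
  assert (hm : INR (m + 1) <> 0) by (apply not_0_INR; lia).
  replace (moment0 m s) with
    (lin s 1 ^ (m + 1) / (INR (m + 1) * s) - lin s 0 ^ (m + 1) / (INR (m + 1) * s)).
  2: { unfold moment0, Dpow, lin.
       replace (1 + s * (1 - 1/2)) with (1 + s/2) by field.
       replace (1 + s * (0 - 1/2)) with (1 - s/2) by field. field. auto. }
  apply (is_RInt_antiderivative (fun u => lin s u ^ (m + 1) / (INR (m + 1) * s))); [lra | |].
  - intros u _. unfold lin. auto_derive; [exact I |].
    replace (Init.Nat.pred (m + 1)) with m by lia.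
    replace (u + - (1 / 2)) with (u - 1/2) by ring. field. auto.
  - intros u _. apply lin_pow_continuous.
Qed.

(* The first centred moment: (u - 1/2) lin^m = (lin^(m+1) - lin^m) / s. *)
Lemma is_RInt_centered_lin_pow (s : R) (m : nat) :
  s <> 0 -> is_RInt (fun u => (u - 1/2) * lin s u ^ m) 0 1 (moment1 m s).
Proof.
  intros hs.
  assert (hdiff := is_RInt_scal _ 0 1 (/ s) _
           (is_RInt_minus _ _ 0 1 _ _ (is_RInt_lin_pow s (m + 1) hs) (is_RInt_lin_pow s m hs))).
  replace (moment1 m s) with (scal (/ s) (minus (moment0 (m + 1) s) (moment0 m s))).
  2: { unfold moment1. change (/ s * (moment0 (m + 1) s - moment0 m s)
                              = (moment0 (m + 1) s - moment0 m s) / s). field. auto. }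
  refine (is_RInt_ext _ _ 0 1 _ _ hdiff).
  intros u _. change (/ s * (lin s u ^ (m + 1) - lin s u ^ m) = (u - 1/2) * lin s u ^ m).
  rewrite Nat.add_1_r. simpl pow. unfold lin. field. auto.
Qed.

Lemma moment1_0 (s : R) : s <> 0 -> moment1 0 s = 0.
Proof.
  intros hs. unfold moment1, moment0, Dpow. simpl. field. auto.
Qed.

(* For m >= 1 and 0 < s < 2 the centred moment is positive: it equals
   int_0^1 (u - 1/2)(lin^m - 1), whose integrand is >= 0 everywhere and > 0
   for u > 1/2.  This makes the kernel parameter of the theorem well defined. *)
Lemma moment1_pos (s : R) (m : nat) :
  (1 <= m)%nat -> 0 < s < 2 -> 0 < moment1 m s.
Proof.
  intros hm hs.
  assert (hs0 : s <> 0) by lra.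
  assert (hdiff := is_RInt_minus _ _ 0 1 _ _
           (is_RInt_centered_lin_pow s m hs0) (is_RInt_centered_lin_pow s 0 hs0)).
  rewrite moment1_0 in hdiff by exact hs0.
  change (is_RInt (fun u => (u - 1/2) * lin s u ^ m - (u - 1/2) * lin s u ^ 0) 0 1
            (moment1 m s - 0)) in hdiff.
  rewrite Rminus_0_r in hdiff.
  refine (is_RInt_pos _ 0 (1/2) 1 _ _ _ _ _ hdiff); [lra | | |].
  - intros u _. apply (ex_derive_continuous (V := R_NormedModule)).
    unfold lin. auto_derive. exact I.
  - intros u hu. rewrite pow_O.
    destruct (Rle_lt_dec u (1/2)) as [hleft | hright].
    + assert (hpow : lin s u ^ m <= 1).
      { rewrite <- (pow1 m). apply pow_incr. unfold lin. nra. }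
      nra.
    + assert (hpow : 1 <= lin s u ^ m) by (apply pow_R1_Rle; unfold lin; nra).
      nra.
  - intros u hu. rewrite pow_O.
    assert (hpow : 1 < lin s u ^ m) by (apply Rlt_pow_R1; [unfold lin; nra | lia]).
    nra.
Qed.

Lemma is_RInt_Kgam_lin_pow (gam t s : R) (m : nat) :
  s <> 0 ->
  is_RInt (fun u => Kgam gam t u * lin s u ^ m) 0 1
    (moment0 m s + gam * (t - 1/2) * moment1 m s).
Proof.
  intros hs.
  assert (hsum := is_RInt_plus _ _ 0 1 _ _ (is_RInt_lin_pow s m hs)
            (is_RInt_scal _ 0 1 (gam * (t - 1/2)) _ (is_RInt_centered_lin_pow s m hs))).
  refine (is_RInt_ext _ _ 0 1 _ _ hsum).
  intros u _. change (lin s u ^ m + gam * (t - 1/2) * ((u - 1/2) * lin s u ^ m)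
                      = Kgam gam t u * lin s u ^ m).
  unfold Kgam. ring.
Qed.

Lemma pos_solution_of_is_RInt (K : R -> R -> R) (k : nat) (f : R -> R) :
  (forall t, continuous f t) ->
  (forall t, 0 <= t <= 1 -> 0 < f t) ->
  (forall t, 0 <= t <= 1 -> is_RInt (fun u => K t u * f u ^ k) 0 1 (f t)) ->
  pos_hammerstein_solution K k f.
Proof.
  intros hcont hpos hint. split; [| split].
  - apply cont_on_01_of_continuous, hcont.
  - exact hpos.
  - intros t ht. apply RiemannInt_of_is_RInt, hint, ht.
Qed.

(* f = 1 solves the equation for every gam, because the kernel has mean 1
   in u (the case m = 0 of the operator formula). *)
Lemma constant_solution (gam : R) (k : nat) :
  pos_hammerstein_solution (Kgam gam) k (fun _ => 1).
Proof.
  apply pos_solution_of_is_RInt.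
  - intros t. apply continuous_const.
  - intros t _. lra.
  - intros t _.
    assert (hone := is_RInt_Kgam_lin_pow gam t 1 0 R1_neq_R0).
    rewrite moment1_0 in hone by exact R1_neq_R0.
    replace (moment0 0 1 + gam * (t - 1/2) * 0) with 1 in hone
      by (unfold moment0, Dpow; simpl; field).
    refine (is_RInt_ext _ _ 0 1 _ _ hone).
    intros u _. rewrite pow1. reflexivity.
Qed.

(* f(u) = c lin(u) solves the equation as soon as the two moment equations
   c^k moment0 k s = c and gam c^k moment1 k s = c s hold: the operator
   maps f to c^k (moment0 + gam (t - 1/2) moment1), which is affine in t. *)
Lemma affine_solution (gam c s : R) (k : nat) :
  0 < c -> 0 < s < 2 ->
  c ^ k * moment0 k s = c ->
  gam * c ^ k * moment1 k s = c * s ->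
  pos_hammerstein_solution (Kgam gam) k (fun u => c * lin s u).
Proof.
  intros hc hs hm0 hm1.
  apply pos_solution_of_is_RInt.
  - intros t. apply (ex_derive_continuous (V := R_NormedModule)).
    unfold lin. auto_derive. exact I.
  - intros t ht. apply Rmult_lt_0_compat; [exact hc | unfold lin; nra].
  - intros t _.
    assert (hint := is_RInt_scal _ 0 1 (c ^ k) _
                      (is_RInt_Kgam_lin_pow gam t s k ltac:(lra))).
    replace (c * lin s t) with (scal (c ^ k) (moment0 k s + gam * (t - 1/2) * moment1 k s)).
    2: { change (c ^ k * (moment0 k s + gam * (t - 1/2) * moment1 k s) = c * lin s t).
         replace (c ^ k * (moment0 k s + gam * (t - 1/2) * moment1 k s))
           with (c ^ k * moment0 k s + (t - 1/2) * (gam * c ^ k * moment1 k s)) by ring.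
         rewrite hm0, hm1. unfold lin. ring. }
    refine (is_RInt_ext _ _ 0 1 _ _ hint).
    intros u _. change (c ^ k * (Kgam gam t u * lin s u ^ k) = Kgam gam t u * (c * lin s u) ^ k).
    rewrite Rpow_mult_distr. ring.
Qed.

Lemma pow_root_exponents (x : R) (n k : nat) :
  (k < n)%nat ->
  x ^ k * x ^ (n - k) = x * x ^ (n - 1) /\
  x ^ (3 * n - k - 2) = x ^ (n - k) * x ^ (n - 1) * x ^ (n - 1).
Proof.
  intros hkn. rewrite <- !pow_add. split.
  - replace (k + (n - k))%nat with (S (n - 1)) by lia. reflexivity.
  - f_equal. lia.
Qed.

Lemma moment0_at_root (n k : nat) (x : R) :
  0 < x -> Pnk n k x = Qnk n k x ->
  moment0 k (x ^ (n - 1)) = x ^ (n - k) / x ^ (n - 1).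
Proof.
  intros hx hroot. unfold Pnk, Qnk in hroot.
  assert (hs : x ^ (n - 1) <> 0) by (apply pow_nonzero; lra).
  assert (hk : INR (k + 1) <> 0) by (apply not_0_INR; lia).
  unfold moment0, Dpow. rewrite hroot. field. auto.
Qed.

(* At a root, s^2 moment1 k s is the denominator of C_n(k). *)
Lemma moment1_at_root (n k : nat) (x : R) :
  0 < x -> Pnk n k x = Qnk n k x ->
  moment1 k (x ^ (n - 1)) * (x ^ (n - 1)) ^ 2 =
  / INR (k + 2) * Dpow (k + 2) (x ^ (n - 1)) - x ^ (n - k).
Proof.
  intros hx hroot.
  assert (hs : x ^ (n - 1) <> 0) by (apply pow_nonzero; lra).
  assert (hk : INR (k + 2) <> 0) by (apply not_0_INR; lia).
  unfold moment1. rewrite (moment0_at_root n k x hx hroot).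
  unfold moment0. replace (k + 1 + 1)%nat with (k + 2)%nat by lia. field. auto.
Qed.

(* Hence C_n(k) = q / moment1 k s, which is the second moment equation
   for c = x. *)
Lemma Cnk_at_root (n k : nat) (x : R) :
  (1 <= k)%nat -> (k < n)%nat -> 0 < x < 1 -> Pnk n k x = Qnk n k x ->
  Cnk n k x * x ^ k * moment1 k (x ^ (n - 1)) = x * x ^ (n - 1).
Proof.
  intros hk hkn hx hroot.
  destruct (pow_root_exponents x n k hkn) as [hsplit hcube].
  assert (hs : 0 < x ^ (n - 1) < 1).
  { split; [apply pow_lt; lra | apply pow_lt_1_compat; [lra | lia]]. }
  assert (hm1 := moment1_pos (x ^ (n - 1)) k hk ltac:(lra)).
  assert (hE := moment1_at_root n k x ltac:(lra) hroot).
  unfold Cnk. fold (Dpow (k + 2) (x ^ (n - 1))).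
  rewrite <- hE, hcube, <- hsplit. field. split; lra.
Qed.

Theorem theorem5p8 (k : nat) (hk : (4 <= k)%nat)
  (xi : nat -> R)
  (hxi : forall n, (k < n)%nat -> (0 < xi n < 1) /\ Pnk n k (xi n) = Qnk n k (xi n))
  (alpha : R) (halpha : is_limsup (fun n => xi n ^ (n - 1)) alpha)
  (np : nat -> nat)
  (hinc : forall p, (np p < np (S p))%nat)
  (hgt : forall p, (k < np p)%nat)
  (hcv : Un_cv (fun p => xi (np p) ^ (np p - 1)) alpha)
  (p : nat) (hp : Rabs (Cnk (np p) k (xi (np p))) < 4) :
  exists f1 f2 : R -> R,
    pos_hammerstein_solution (Kgam (Cnk (np p) k (xi (np p)))) k f1 /\
    pos_hammerstein_solution (Kgam (Cnk (np p) k (xi (np p)))) k f2 /\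
    (exists t, 0 <= t <= 1 /\ f1 t <> f2 t).
Proof.
  set (n := np p). set (x := xi n). set (s := x ^ (n - 1)).
  assert (hkn : (k < n)%nat) by apply hgt.
  destruct (hxi n hkn) as [hx hroot]. fold x in hx, hroot.
  assert (hs : 0 < s < 1).
  { split; [apply pow_lt; lra | apply pow_lt_1_compat; [lra | lia]]. }
  exists (fun _ => 1), (fun u => x * lin s u).
  split; [| split].
  - apply constant_solution.
  - apply affine_solution; [lra | lra | |].
    + unfold s. rewrite (moment0_at_root n k x ltac:(lra) hroot).
      destruct (pow_root_exponents x n k hkn) as [hsplit _].
      fold s in hsplit |- *. unfold Rdiv. rewrite <- Rmult_assoc, hsplit.
      field. lra.
    + apply Cnk_at_root; [lia | exact hkn | exact hx | exact hroot].
  - exists (1/2). split; [lra |]. unfold lin.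
    replace (1/2 - 1/2) with 0 by ring. nra.
Qed.
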